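(* Let $R$ be a commutative ring, $S$ a multiplicative subset of $R$, and $M$ an $R$-module. The following are equivalent: (1) $M$ is uniformly $S$-Noetherian; (2) there exists $s\in S$ such that every ascending chain $M_1\subseteq M_2\subseteq\cdots$ of submodules of $M$ is stationary with respect to $s$, i.e. there is $k\ge 1$ with $sM_n\subseteq M_k$ for all $n\ge k$; (3) there exists $s\in S$ such that every nonempty family $\mathcal F$ of submodules of $M$ has a maximal element with respect to $s$, i.e. some $M_0\in\mathcal F$ such that $sN\subseteq M_0$ for every $N\in\mathcal F$ with $M_0\subseteq N$.
   Context: All rings are commutative with identity; a multiplicative subset $S$ contains $1$ and is closed under multiplication. An $R$-module $M$ is uniformly $S$-Noetherian ($u$-$S$-Noetherian) if there exists a single $s\in S$ such that for every submodule $N$ of $M$ there is a finitely generated submodule $F\subseteq N$ with $sN\subseteq F$. A ring is $u$-$S$-Noetherian if it is so as a module over itself. *)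

From HB Require Import structures.
From mathcomp Require Import all_boot all_order all_algebra.
Set Implicit Arguments. Unset Strict Implicit. Unset Printing Implicit Defensive.
Import GRing.Theory.
Local Open Scope ring_scope.

Definition mult_subset (R : comPzRingType) (S : R -> Prop) : Prop :=
  S 1 /\ (forall a b, S a -> S b -> S (a * b)).

Definition is_submodule (R : comPzRingType) (M : lmodType R) (N : M -> Prop) : Prop :=
  N 0 /\ (forall x y, N x -> N y -> N (x + y)) /\ (forall (r : R) x, N x -> N (r *: x)).

Definition subm_le (R : comPzRingType) (M : lmodType R) (A B : M -> Prop) : Prop :=
  forall x, A x -> B x.

Definition smul_sub (R : comPzRingType) (M : lmodType R) (s : R) (N A : M -> Prop) : Prop :=
  forall x, N x -> A (s *: x).

Definition span_of (R : comPzRingType) (M : lmodType R) (l : seq M) (x : M) : Prop :=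
  exists c : 'I_(size l) -> R, x = \sum_(i < size l) c i *: nth 0 l i.

Definition fin_gen (R : comPzRingType) (M : lmodType R) (F : M -> Prop) : Prop :=
  exists l : seq M, forall x, F x <-> span_of l x.

Definition u_S_noetherian (R : comPzRingType) (S : R -> Prop) (M : lmodType R) : Prop :=
  exists s, S s /\
    forall N : M -> Prop, is_submodule N ->
      exists F : M -> Prop, fin_gen F /\ subm_le F N /\ smul_sub s N F.

Definition S_stationary_chains (R : comPzRingType) (S : R -> Prop) (M : lmodType R) : Prop :=
  exists s, S s /\
    forall Ms : nat -> (M -> Prop),
      (forall n, is_submodule (Ms n)) ->
      (forall n, subm_le (Ms n) (Ms n.+1)) ->
      exists k, forall n, (k <= n)%N -> smul_sub s (Ms n) (Ms k).

Definition S_maximal_condition (R : comPzRingType) (S : R -> Prop) (M : lmodType R) : Prop :=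
  exists s, S s /\
    forall Fam : (M -> Prop) -> Prop,
      (forall N, Fam N -> is_submodule N) ->
      (exists N, Fam N) ->
      exists M0, Fam M0 /\ forall N, Fam N -> subm_le M0 N -> smul_sub s N M0.

(* If every submodule is s-finite, the union of a chain is s-contained
   in the span of finitely many of its elements, all of which already lie in
   one member of the chain.  If the s-maximal condition failed for a family,
   dependent choice would produce a chain whose each step escapes s times the
   previous term, contradicting s-stationarity.  And an s-maximal element among
   the finitely generated submodules of N s-contains N, since adding any x in N
   to its generators stays in the family.  None of this uses that S is
   multiplicative: the three conditions are equivalent for each s separately. *)
From mathcomp Require Import all_boot all_order all_algebra.
From Stdlib Require Import Classical ClassicalEpsilon.
Set Implicit Arguments.
Unset Strict Implicit.
Unset Printing Implicit Defensive.

Import GRing.Theory.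
Local Open Scope ring_scope.

Section Spans.
Variables (R : comPzRingType) (M : lmodType R).
Implicit Types (l : seq M) (N : M -> Prop).

Lemma span_of_le N l :
  is_submodule N -> (forall y, y \in l -> N y) -> subm_le (span_of l) N.
Proof.
move=> [N0 [ND NZ]] Nl x [c ->].
apply: (big_ind N) => // i _.
by apply: NZ; apply: Nl; apply: mem_nth.
Qed.

Lemma span_of_submodule l : is_submodule (span_of l).
Proof.
split; first by exists (fun _ => 0); rewrite big1 // => i _; rewrite scale0r.
split.
  move=> x y [c1 ->] [c2 ->]; exists (fun i => c1 i + c2 i).
  by rewrite -big_split /=; apply: eq_bigr => i _; rewrite scalerDl.
move=> r x [c ->]; exists (fun i => r * c i); rewrite scaler_sumr.
by apply: eq_bigr => i _; rewrite scalerA.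
Qed.

Lemma span_of_mem l y : y \in l -> span_of l y.
Proof.
move=> yl; have yl_idx : (index y l < size l)%N by rewrite index_mem.
exists (fun i => if i == Ordinal yl_idx then 1 else 0).
rewrite (bigD1 (Ordinal yl_idx)) //= eqxx scale1r big1 ?addr0 ?nth_index //.
by move=> i /negbTE ->; rewrite scale0r.
Qed.

Lemma span_of_cons_le l x : subm_le (span_of l) (span_of (x :: l)).
Proof.
apply: span_of_le; first exact: span_of_submodule.
by move=> y yl; apply: span_of_mem; rewrite inE yl orbT.
Qed.

End Spans.

Section Chains.
Variables (R : comPzRingType) (M : lmodType R) (Ms : nat -> M -> Prop).
Hypothesis Ms_sub : forall n, is_submodule (Ms n).
Hypothesis Ms_chain : forall n, subm_le (Ms n) (Ms n.+1).

Lemma chain_le m n : (m <= n)%N -> subm_le (Ms m) (Ms n).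
Proof.
elim: n => [|n IHn]; first by rewrite leqn0 => /eqP ->.
rewrite leq_eqVlt => /orP [/eqP -> //|lt_mn] x /(IHn lt_mn); exact: Ms_chain.
Qed.

Lemma chain_union_submodule : is_submodule (fun x => exists n, Ms n x).
Proof.
split; first by exists 0%N; case: (Ms_sub 0%N).
split.
  move=> x y [m xm] [n yn]; exists (maxn m n).
  case: (Ms_sub (maxn m n)) => _ [MD _]; apply: MD.
    exact: chain_le (leq_maxl m n) _ xm.
  exact: chain_le (leq_maxr m n) _ yn.
by move=> r x [n xn]; exists n; case: (Ms_sub n) => _ [_ MZ]; apply: MZ.
Qed.

Lemma chain_union_seq (l : seq M) :
  (forall y, y \in l -> exists n, Ms n y) ->
  exists k, forall y, y \in l -> Ms k y.
Proof.
elim: l => [|a l IHl] l_union; first by exists 0%N.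
have [m l_m] := IHl (fun y yl => l_union y (mem_behead (s := a :: l) yl)).
have [n a_n] := l_union a (mem_head _ _).
exists (maxn m n) => y; rewrite inE => /orP [/eqP ->|yl].
  exact: chain_le (leq_maxr m n) _ a_n.
exact: chain_le (leq_maxl m n) _ (l_m y yl).
Qed.

End Chains.

Section FixedScalar.
Variables (R : comPzRingType) (M : lmodType R) (s : R).

Definition noetherian_wrt : Prop :=
  forall N : M -> Prop, is_submodule N ->
    exists F, fin_gen F /\ subm_le F N /\ smul_sub s N F.

Definition stationary_wrt : Prop :=
  forall Ms : nat -> M -> Prop,
    (forall n, is_submodule (Ms n)) -> (forall n, subm_le (Ms n) (Ms n.+1)) ->
    exists k, forall n, (k <= n)%N -> smul_sub s (Ms n) (Ms k).

Definition maximal_wrt : Prop :=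
  forall Fam : (M -> Prop) -> Prop,
    (forall N, Fam N -> is_submodule N) -> (exists N, Fam N) ->
    exists M0, Fam M0 /\ forall N, Fam N -> subm_le M0 N -> smul_sub s N M0.

Lemma noetherian_wrt_stationary : noetherian_wrt -> stationary_wrt.
Proof.
move=> sfin Ms Ms_sub Ms_chain.
have [F [[l F_span] [F_union sF]]] := sfin _ (chain_union_submodule Ms_sub Ms_chain).
have [k l_k] : exists k, forall y, y \in l -> Ms k y.
  apply: chain_union_seq => // y yl.
  by apply: F_union; apply/F_span; apply: span_of_mem.
exists k => n le_kn x xn.
have /F_span : F (s *: x) by apply: sF; exists n.
exact: span_of_le (Ms_sub k) l_k _.
Qed.

Lemma stationary_wrt_maximal : stationary_wrt -> maximal_wrt.
Proof.
move=> sstat Fam Fam_sub [N0 Fam_N0].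
apply: NNPP => no_max.
have escape : forall T : {N | Fam N}, exists T' : {N | Fam N},
    subm_le (sval T) (sval T') /\ ~ smul_sub s (sval T') (sval T).
  move=> [A Fam_A] /=; apply: NNPP => A_max; apply: no_max.
  exists A; split => // N Fam_N le_AN; apply: NNPP => sN_A.
  by apply: A_max; exists (exist _ N Fam_N).
pose next T := sval (constructive_indefinite_description _ (escape T)).
have nextP T := svalP (constructive_indefinite_description _ (escape T)).
pose chain n := iter n next (exist _ N0 Fam_N0).
have [k stat_k] := sstat (fun n => sval (chain n))
  (fun n => Fam_sub _ (svalP (chain n))) (fun n => (nextP (chain n)).1).
exact: (nextP (chain k)).2 (stat_k k.+1 (leqnSn k)).
Qed.

Lemma maximal_wrt_noetherian : maximal_wrt -> noetherian_wrt.
Proof.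
move=> smax N N_sub.
pose Fam F := is_submodule F /\ fin_gen F /\ subm_le F N.
have Fam_nil : Fam (span_of [::]).
  split; first exact: span_of_submodule.
  split; first by exists [::].
  by apply: span_of_le => // y; rewrite in_nil.
have [M0 [[_ [[l M0_span] le_M0N]] M0_max]] :=
  smax Fam (fun F (Fam_F : Fam F) => Fam_F.1) (ex_intro Fam _ Fam_nil).
exists M0; split; first by exists l.
split=> // x Nx.
have Fam_xl : Fam (span_of (x :: l)).
  split; first exact: span_of_submodule.
  split; first by exists (x :: l).
  apply: span_of_le => // y; rewrite inE => /orP [/eqP -> //|yl].
  by apply: le_M0N; apply/M0_span; apply: span_of_mem.
apply: (M0_max _ Fam_xl); first by move=> y /M0_span; apply: span_of_cons_le.
exact/span_of_mem/mem_head.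
Qed.

End FixedScalar.

Lemma exists_in_impl (T : Type) (S P Q : T -> Prop) :
  (forall s, P s -> Q s) -> (exists s, S s /\ P s) -> exists s, S s /\ Q s.
Proof. by move=> PQ [s [Ss Ps]]; exists s; split; [|apply: PQ]. Qed.

Theorem theorem2p8 (R : comPzRingType) (S : R -> Prop) (M : lmodType R) :
  mult_subset S ->
  (u_S_noetherian S M <-> S_stationary_chains S M) /\
  (S_stationary_chains S M <-> S_maximal_condition S M).
Proof.
move=> _.
have one_two := exists_in_impl (S := S) (@noetherian_wrt_stationary R M).
have two_three := exists_in_impl (S := S) (@stationary_wrt_maximal R M).
have three_one := exists_in_impl (S := S) (@maximal_wrt_noetherian R M).
split; split.
- exact: one_two.
- by move/two_three/three_one.
- exact: two_three.
- by move/three_one/one_two.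
Qed.
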